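(* The relation $t\subseteq\mathbb{N}\times\mathbb{T}$ defined below is the graph of a function $t:\mathbb{N}\to\mathbb{T}$, and this function satisfies $t(n(X))=X$ for all $X\in\mathbb{T}$ and $n(t(x))=x$ for all $x\in\mathbb{N}$.
   Context: Let $\mathbb{T}$ be the set of finite terms defined inductively by: the constant $e\in\mathbb{T}$; and if $X\in\mathbb{T}$ and $Xs$ is a finite (possibly empty) list of elements of $\mathbb{T}$, then $v(X,Xs)\in\mathbb{T}$ and $w(X,Xs)\in\mathbb{T}$. Write $[\,]$ for the empty list and $[Y|Xs]$ for the list with first element $Y$ followed by the list $Xs$ (so $[e,Y|Ys]$ is the list starting with $e$, then $Y$, then $Ys$). Define $n:\mathbb{T}\to\mathbb{N}$ by $n(e)=0$, $n(v(X,[\,]))=2^{n(X)+1}-1$, $n(v(X,[Y|Xs]))=(n(w(Y,Xs))+1)2^{n(X)+1}-1$, $n(w(X,[\,]))=2^{n(X)+2}-2$, $n(w(X,[Y|Xs]))=(n(v(Y,Xs))+2)2^{n(X)+1}-2$. Let $\sigma\subseteq\mathbb{T}\times\mathbb{T}$ be the smallest relation such that (for all terms and lists of the appropriate kinds): (1) $\sigma(e,v(e,[\,]))$; (2) $\sigma(v(e,[\,]),w(e,[\,]))$; (3) if $\sigma(X,X')$ then $\sigma(v(e,[X|Xs]),w(X',Xs))$; (4) if $\sigma(P,T)$ then $\sigma(v(T,Xs),w(e,[P|Xs]))$; (5) if $\sigma(T,T')$ then $\sigma(w(T,[\,]),v(T',[\,]))$; (6) $\sigma(w(Z,[e]),v(Z,[e]))$;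 (7) if $\sigma(Y,Y')$ then $\sigma(w(Z,[e,Y|Ys]),v(Z,[Y'|Ys]))$; (8) if $\sigma(X',X)$ then $\sigma(w(Z,[X|Xs]),v(Z,[e,X'|Xs]))$. Let $O\subseteq\mathbb{T}\times\mathbb{T}$ consist of the pairs $(e,v(e,[\,]))$, $(w(X,Xs),v(e,[X|Xs]))$, and $(v(X,Xs),v(X',Xs))$ whenever $\sigma(X,X')$. Let $I\subseteq\mathbb{T}\times\mathbb{T}$ consist of the pairs $(e,w(e,[\,]))$, $(v(X,Xs),w(e,[X|Xs]))$, and $(w(X,Xs),w(X',Xs))$ whenever $\sigma(X,X')$. Let $t\subseteq\mathbb{N}\times\mathbb{T}$ be the smallest relation such that: $(0,e)\in t$; if $x>0$ is odd, $((x-1)/2,A)\in t$ and $(A,R)\in O$, then $(x,R)\in t$; if $x>0$ is even, $(x/2-1,A)\in t$ and $(A,R)\in I$, then $(x,R)\in t$. *)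

From Stdlib Require Import List Arith.
Import ListNotations.

Inductive term : Type :=
| e : term
| v : term -> list term -> term
| w : term -> list term -> term.

(* For a = n(X), the inner function g Xs a returns the pair
   (n(v(X,Xs)), n(w(X,Xs))); the two components are computed jointly
   since n(v(X,[Y|Xs])) uses n(w(Y,Xs)) and vice versa. *)
Fixpoint n (t : term) : nat :=
  let g := fix g (l : list term) (a : nat) {struct l} : nat * nat :=
      match l with
      | [] => (2 ^ (a + 1) - 1, 2 ^ (a + 2) - 2)
      | Y :: ys =>
          let p := g ys (n Y) in
          ((snd p + 1) * 2 ^ (a + 1) - 1, (fst p + 2) * 2 ^ (a + 1) - 2)
      end in
  match t with
  | e => 0
  | v X xs => fst (g xs (n X))
  | w X xs => snd (g xs (n X))
  end.

Lemma n_e : n e = 0. Proof. reflexivity. Qed.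
Lemma n_v_nil X : n (v X []) = 2 ^ (n X + 1) - 1. Proof. reflexivity. Qed.
Lemma n_v_cons X Y xs :
  n (v X (Y :: xs)) = (n (w Y xs) + 1) * 2 ^ (n X + 1) - 1.
Proof. reflexivity. Qed.
Lemma n_w_nil X : n (w X []) = 2 ^ (n X + 2) - 2. Proof. reflexivity. Qed.
Lemma n_w_cons X Y xs :
  n (w X (Y :: xs)) = (n (v Y xs) + 2) * 2 ^ (n X + 1) - 2.
Proof. reflexivity. Qed.

Inductive sigma : term -> term -> Prop :=
| sigma1 : sigma e (v e [])
| sigma2 : sigma (v e []) (w e [])
| sigma3 : forall X X' xs, sigma X X' -> sigma (v e (X :: xs)) (w X' xs)
| sigma4 : forall P T xs, sigma P T -> sigma (v T xs) (w e (P :: xs))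
| sigma5 : forall T T', sigma T T' -> sigma (w T []) (v T' [])
| sigma6 : forall Z, sigma (w Z [e]) (v Z [e])
| sigma7 : forall Z Y Y' ys, sigma Y Y' ->
    sigma (w Z (e :: Y :: ys)) (v Z (Y' :: ys))
| sigma8 : forall Z X X' xs, sigma X' X ->
    sigma (w Z (X :: xs)) (v Z (e :: X' :: xs)).

Inductive O : term -> term -> Prop :=
| O1 : O e (v e [])
| O2 : forall X xs, O (w X xs) (v e (X :: xs))
| O3 : forall X X' xs, sigma X X' -> O (v X xs) (v X' xs).

Inductive I : term -> term -> Prop :=
| I1 : I e (w e [])
| I2 : forall X xs, I (v X xs) (w e (X :: xs))
| I3 : forall X X' xs, sigma X X' -> I (w X xs) (w X' xs).

Inductive t : nat -> term -> Prop :=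
| t0 : t 0 e
| t_odd : forall x A R, 0 < x -> Nat.odd x = true ->
    t ((x - 1) / 2) A -> O A R -> t x R
| t_even : forall x A R, 0 < x -> Nat.even x = true ->
    t (x / 2 - 1) A -> I A R -> t x R.

(* sigma is the successor function of the numbering n: it raises n by one, it is
   functional and injective, every term has a sigma-successor and every term but
   e a sigma-predecessor.  Consequently O and I are total functions on terms that
   realize x |-> 2x+1 and x |-> 2x+2 under n, and every term other than e is in
   the image of one of them.  Since every x > 0 is uniquely 2k+1 or 2k+2
   with k < x, the recursion defining t follows the bijective base-2 digits of x,
   which gives the three claims by strong induction. *)

From Stdlib Require Import List Arith Lia Wf_nat.

Lemma term_e_dec (X : term) : {X = e} + {X <> e}.
Proof. destruct X; [left | right | right]; congruence. Qed.

Lemma n_head_succ X X' xs : n X' = S (n X) ->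
  n (v X' xs) = 2 * n (v X xs) + 1 /\ n (w X' xs) = 2 * n (w X xs) + 2.
Proof.
  intros HX'.
  assert (Hpos : 2 ^ n X <> 0) by (apply Nat.pow_nonzero; lia).
  destruct xs as [|Y ys];
    rewrite ?n_v_nil, ?n_w_nil, ?n_v_cons, ?n_w_cons, HX', !Nat.pow_add_r,
      !Nat.pow_succ_r', Nat.pow_0_r; nia.
Qed.

Lemma n_sigma X Y : sigma X Y -> n Y = S (n X).
Proof.
  assert (Hpos : forall a, 2 ^ a <> 0) by (intros; apply Nat.pow_nonzero; lia).
  induction 1 as [| | X X' xs _ IH | P T xs _ IH | T T' _ IH | Z
                 | Z Y Y' ys _ IH | Z X X' xs _ IH].
  - reflexivity.
  - reflexivity.
  - rewrite n_v_cons, (proj2 (n_head_succ _ _ xs IH)). simpl. lia.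
  - rewrite n_w_cons, (proj1 (n_head_succ _ _ xs IH)). simpl. lia.
  - rewrite n_v_nil, n_w_nil, IH, !Nat.pow_add_r, !Nat.pow_succ_r', Nat.pow_0_r.
    specialize (Hpos (n T)). lia.
  - rewrite n_v_cons, n_w_cons. specialize (Hpos (n Z + 1)). simpl. nia.
  - rewrite n_v_cons, n_w_cons, n_v_cons, (proj2 (n_head_succ _ _ ys IH)).
    specialize (Hpos (n Z + 1)). simpl. nia.
  - rewrite n_v_cons, n_w_cons, n_w_cons, (proj1 (n_head_succ _ _ xs IH)).
    specialize (Hpos (n Z + 1)). simpl. nia.
Qed.

Lemma n_O A R : O A R -> n R = 2 * n A + 1.
Proof.
  destruct 1 as [| X xs | X X' xs HX].
  - reflexivity.
  - rewrite n_v_cons. simpl. lia.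
  - exact (proj1 (n_head_succ _ _ xs (n_sigma _ _ HX))).
Qed.

Lemma n_I A R : I A R -> n R = 2 * n A + 2.
Proof.
  destruct 1 as [| X xs | X X' xs HX].
  - reflexivity.
  - rewrite n_w_cons. simpl. lia.
  - exact (proj2 (n_head_succ _ _ xs (n_sigma _ _ HX))).
Qed.

Lemma sigma_not_e X : ~ sigma X e.
Proof. intros H; inversion H. Qed.

(* Rules (7) and (8) make the two claims depend on each other. *)
Lemma sigma_functional_injective X Y : sigma X Y ->
  (forall Y', sigma X Y' -> Y = Y') /\ (forall X', sigma X' Y -> X = X').
Proof.
  induction 1 as [| | X X' xs HX IH | P T xs HP IH | T T' HT IH | Z
                 | Z Y Y' ys HY IH | Z X X' xs HX IH];
    split; intros Z2 H2; inversion H2; subst;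
    try reflexivity; try (exfalso; eapply sigma_not_e; eassumption);
    try (f_equal; auto; fail);
    first [ rewrite (proj1 IH _ ltac:(eassumption))
          | rewrite (proj2 IH _ ltac:(eassumption)) ]; reflexivity.
Qed.

Lemma sigma_functional X Y Y' : sigma X Y -> sigma X Y' -> Y = Y'.
Proof. intros H; exact (proj1 (sigma_functional_injective _ _ H) Y'). Qed.

Fixpoint term_size (X : term) : nat :=
  match X with
  | e => 1
  | v Y ys | w Y ys => S (term_size Y + list_sum (map term_size ys))
  end.

Section SigmaStep.

Variable X : term.
Hypothesis succ_below :
  forall Y, term_size Y < term_size X -> exists Y', sigma Y Y'.
Hypothesis pred_below :
  forall Y, term_size Y < term_size X -> Y <> e -> exists P, sigma P Y.

Lemma sigma_succ_step : exists Y, sigma X Y.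
Proof.
  destruct X as [|Z xs|Z xs]; simpl in succ_below, pred_below.
  - eexists; apply sigma1.
  - destruct (term_e_dec Z) as [->|HZ].
    + destruct xs as [|Y ys]; [eexists; apply sigma2|].
      destruct (succ_below Y) as [Y' HY]; [simpl; lia|].
      eexists; apply sigma3, HY.
    + destruct (pred_below Z) as [P HP]; [lia|assumption|].
      eexists; apply sigma4, HP.
  - destruct xs as [|Y ys].
    + destruct (succ_below Z) as [Z' HZ]; [lia|].
      eexists; apply sigma5, HZ.
    + destruct (term_e_dec Y) as [->|HY].
      * destruct ys as [|Y ys]; [eexists; apply sigma6|].
        destruct (succ_below Y) as [Y' HY]; [simpl; lia|].
        eexists; apply sigma7, HY.
      * destruct (pred_below Y) as [P HP]; [simpl; lia|assumption|].
        eexists; apply sigma8, HP.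
Qed.

Lemma sigma_pred_step : X <> e -> exists P, sigma P X.
Proof.
  intros HX.
  destruct X as [|Z xs|Z xs]; simpl in succ_below, pred_below; [congruence| |].
  - destruct xs as [|Y ys].
    + destruct (term_e_dec Z) as [->|HZ]; [eexists; apply sigma1|].
      destruct (pred_below Z) as [P HP]; [lia|assumption|].
      eexists; apply sigma5, HP.
    + destruct (term_e_dec Y) as [->|HY].
      * destruct ys as [|Y ys]; [eexists; apply sigma6|].
        destruct (succ_below Y) as [Y' HY]; [simpl; lia|].
        eexists; apply sigma8, HY.
      * destruct (pred_below Y) as [P HP]; [simpl; lia|assumption|].
        eexists; apply sigma7, HP.
  - destruct (term_e_dec Z) as [->|HZ].
    + destruct xs as [|Y ys]; [eexists; apply sigma2|].
      destruct (succ_below Y) as [Y' HY]; [simpl; lia|].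
      eexists; apply sigma4, HY.
    + destruct (pred_below Z) as [P HP]; [lia|assumption|].
      eexists; apply sigma3, HP.
Qed.

End SigmaStep.

Lemma sigma_succ_pred X : (exists Y, sigma X Y) /\ (X <> e -> exists P, sigma P X).
Proof.
  induction X as [X IH] using (induction_ltof1 _ term_size); unfold ltof in IH.
  split; [apply sigma_succ_step | apply sigma_pred_step];
    intros Y HY; apply (IH Y HY).
Qed.

Lemma O_functional A R R' : O A R -> O A R' -> R = R'.
Proof.
  intros H H'; inversion H; inversion H'; subst; try discriminate; try congruence.
  match goal with Hv : v _ _ = v _ _ |- _ => injection Hv; intros; subst end.
  f_equal; eapply sigma_functional; eassumption.
Qed.

Lemma I_functional A R R' : I A R -> I A R' -> R = R'.
Proof.
  intros H H'; inversion H; inversion H'; subst; try discriminate; try congruence.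
  match goal with Hw : w _ _ = w _ _ |- _ => injection Hw; intros; subst end.
  f_equal; eapply sigma_functional; eassumption.
Qed.

Lemma O_total A : exists R, O A R.
Proof.
  destruct A as [|X xs|X xs]; [eexists; apply O1| |eexists; apply O2].
  destruct (proj1 (sigma_succ_pred X)) as [X' HX]. eexists; apply O3, HX.
Qed.

Lemma I_total A : exists R, I A R.
Proof.
  destruct A as [|X xs|X xs]; [eexists; apply I1|eexists; apply I2|].
  destruct (proj1 (sigma_succ_pred X)) as [X' HX]. eexists; apply I3, HX.
Qed.

Lemma O_or_I_image X : X <> e -> (exists A, O A X) \/ (exists A, I A X).
Proof.
  intros HX; destruct X as [|Z xs|Z xs]; [congruence|left|right].
  - destruct (term_e_dec Z) as [->|HZ].
    + destruct xs as [|Y ys]; eexists; [apply O1|apply O2].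
    + destruct (proj2 (sigma_succ_pred Z) HZ) as [P HP]. eexists; apply O3, HP.
  - destruct (term_e_dec Z) as [->|HZ].
    + destruct xs as [|Y ys]; eexists; [apply I1|apply I2].
    + destruct (proj2 (sigma_succ_pred Z) HZ) as [P HP]. eexists; apply I3, HP.
Qed.

Lemma t_odd_step k A R : t k A -> O A R -> t (2 * k + 1) R.
Proof.
  intros HA HR; apply (t_odd _ A); [lia | | | exact HR].
  - apply Nat.odd_spec; exists k; reflexivity.
  - replace (2 * k + 1 - 1) with (k * 2) by lia. rewrite Nat.div_mul; auto.
Qed.

Lemma t_even_step k A R : t k A -> I A R -> t (2 * k + 2) R.
Proof.
  intros HA HR; apply (t_even _ A); [lia | | | exact HR].
  - apply Nat.even_spec; exists (S k); lia.
  - replace (2 * k + 2) with (S k * 2) by lia. rewrite Nat.div_mul; [|lia].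
    simpl; rewrite Nat.sub_0_r; exact HA.
Qed.

Lemma odd_even_false x : Nat.odd x = true -> Nat.even x = true -> False.
Proof. intros Hodd Heven; rewrite <- Nat.negb_even, Heven in Hodd; discriminate. Qed.

Lemma t_functional x X Y : t x X -> t x Y -> X = Y.
Proof.
  intros HX; revert Y;
  induction HX as [| x A R Hpos Hx _ IH HR | x A R Hpos Hx _ IH HR];
    intros Y HY; inversion HY; subst; try lia;
    try (exfalso; eapply odd_even_false; eassumption).
  - reflexivity.
  - eapply O_functional; [exact HR|]. erewrite IH; eassumption.
  - eapply I_functional; [exact HR|]. erewrite IH; eassumption.
Qed.

Lemma t_total x : exists X, t x X.
Proof.
  induction x as [x IH] using lt_wf_ind.
  destruct x as [|x]; [exists e; apply t0|].
  destruct (Nat.Even_or_Odd x) as [[k ->]|[k ->]].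
  - destruct (IH k) as [A HA]; [lia|].
    destruct (O_total A) as [R HR]. exists R.
    replace (S (2 * k)) with (2 * k + 1) by lia.
    apply (t_odd_step k A); assumption.
  - destruct (IH k) as [A HA]; [lia|].
    destruct (I_total A) as [R HR]. exists R.
    replace (S (2 * k + 1)) with (2 * k + 2) by lia.
    apply (t_even_step k A); assumption.
Qed.

Lemma n_of_t x X : t x X -> n X = x.
Proof.
  induction 1 as [| x A R _ Hx _ IH HR | x A R Hpos Hx _ IH HR].
  - reflexivity.
  - rewrite (n_O _ _ HR), IH.
    apply Nat.odd_spec in Hx; destruct Hx as [k ->].
    replace (2 * k + 1 - 1) with (k * 2) by lia. rewrite Nat.div_mul; lia.
  - rewrite (n_I _ _ HR), IH.
    apply Nat.even_spec in Hx; destruct Hx as [k ->].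
    replace (2 * k) with (k * 2) by lia. rewrite Nat.div_mul; lia.
Qed.

Lemma t_n X : t (n X) X.
Proof.
  induction X as [X IH] using (induction_ltof1 _ n); unfold ltof in IH.
  destruct (term_e_dec X) as [->|HX]; [apply t0|].
  destruct (O_or_I_image X HX) as [[A HA]|[A HA]].
  - rewrite (n_O _ _ HA). apply (t_odd_step _ A); [|exact HA].
    apply IH. rewrite (n_O _ _ HA); lia.
  - rewrite (n_I _ _ HA). apply (t_even_step _ A); [|exact HA].
    apply IH. rewrite (n_I _ _ HA); lia.
Qed.

Theorem proposition4 :
  (forall x : nat, exists! X : term, t x X) /\
  (forall X : term, t (n X) X) /\
  (forall (x : nat) (X : term), t x X -> n X = x).
Proof.
  split; [|split].
  - intros x; destruct (t_total x) as [X HX].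
    exists X; split; [exact HX|]. intros Y; apply t_functional, HX.
  - exact t_n.
  - exact n_of_t.
Qed.
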